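(* Let $d,k\ge1$, let $g:\mathbb{R}^k\to\mathbb{R}$ be differentiable with $g(0)=0$ and $\nabla g(0)\neq \mathbf{0}$, and for $B\in\mathbb{R}^{k\times d}$ let $f(z)=g(Bz)$. Given $n$ training samples $\{(x_i,y_i)\}_{i=1}^n\subset\mathbb{R}^d\times\mathbb{R}$, suppose $f$ is trained to minimize $\frac12\sum_{i=1}^n(y_i-f(x_i))^2$ by gradient descent on $B$ with learning rate $\eta>0$, starting from $B^{(0)}=\mathbf{0}$. Let $B^{(1)}$ be the weight after one gradient descent step and $f_1(z):=g(B^{(1)}z)$. Then for every $z\in\mathbb{R}^d$, $$\nabla f_1(z)\,\nabla f_1(z)^T\propto {B^{(1)}}^TB^{(1)},$$ i.e. $\nabla f_1(z)\nabla f_1(z)^T$ is a scalar multiple of ${B^{(1)}}^TB^{(1)}$.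
   Context: $\nabla f_1(z)\in\mathbb{R}^d$ is the gradient of $f_1$ with respect to its input. ''$P\propto Q$'' for matrices means $P=cQ$ for some scalar $c$. *)

From HB Require Import structures.
From mathcomp Require Import all_boot all_order all_algebra.
From mathcomp Require Import all_classical all_reals all_analysis.
Set Implicit Arguments. Unset Strict Implicit. Unset Printing Implicit Defensive.
Import Order.TTheory GRing.Theory Num.Theory.
Import numFieldNormedType.Exports.
Local Open Scope ring_scope.

Definition grad (R : realType) (m n : nat) (f : 'M[R]_(m, n) -> R)
    (x : 'M[R]_(m, n)) : 'M[R]_(m, n) :=
  \matrix_(i < m, j < n) ('D_(delta_mx i j) f x).

Definition sq_loss (R : realType) (k d n : nat) (g : 'cV[R]_k -> R)
    (xs : 'I_n -> 'cV[R]_d) (ys : 'I_n -> R) (B : 'M[R]_(k, d)) : R :=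
  2^-1 * \sum_(i < n) (ys i - g (B *m xs i)) ^+ 2.

Definition gd_step (R : realType) (k d n : nat) (g : 'cV[R]_k -> R)
    (xs : 'I_n -> 'cV[R]_d) (ys : 'I_n -> R) (eta : R) (B0 : 'M[R]_(k, d))
    : 'M[R]_(k, d) :=
  B0 - eta *: grad (sq_loss g xs ys) B0.

From HB Require Import structures.
From mathcomp Require Import all_boot all_order all_algebra.
From mathcomp Require Import all_classical all_reals all_analysis.
From mathcomp Require Import ring.
Import Order.TTheory GRing.Theory Num.Theory.
Import numFieldNormedType.Exports.
Local Open Scope ring_scope.

(* Starting from B = 0 with g 0 = 0, every residual equals its label, so the
   loss gradient is -grad g(0) v^T with v = sum_i y_i x_i: the step B1 is the
   rank-one matrix (eta grad g(0)) v^T.  By the chain rule grad f1(z) is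
   B1^T grad g(B1 z), a multiple of v, hence grad f1 grad f1^T is a multiple of
   v v^T, and so is B1^T B1 = eta^2 |grad g(0)|^2 v v^T with a nonzero factor. *)

Section DeriveLinearComp.
Context {R : realType} {V W U : normedModType R}.
Variables (f : W -> U) (L : {linear V -> W}).

Let difference_quotient_comp a v :
  (fun h : R => h^-1 *: (((f \o L) \o shift a) (h *: v) - (f \o L) a)) =
  (fun h : R => h^-1 *: ((f \o shift (L a)) (h *: L v) - f (L a))).
Proof. by apply/funext => h /=; rewrite linearP. Qed.

Lemma derive_comp_linear a v : 'D_v (f \o L) a = 'D_(L v) f (L a).
Proof. by rewrite /derive difference_quotient_comp. Qed.

Lemma derivable_comp_linear a v : derivable (f \o L) a v = derivable f (L a) (L v).
Proof. by rewrite /derivable difference_quotient_comp. Qed.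

End DeriveLinearComp.

Lemma mxtrace_trmx_mul_delta (R : comPzRingType) m n (M : 'M[R]_(m, n)) i j :
  \tr (M^T *m delta_mx i j) = M i j.
Proof.
rewrite mxtrace_mulC /mxtrace (bigD1 i) // big1 ?addr0 => [|k /negbTE ik].
  rewrite mxE (bigD1 j) // big1 ?addr0 => [|l /negbTE jl].
    by rewrite !mxE !eqxx /= mul1r !addr0.
  by rewrite !mxE jl andbF mul0r.
by rewrite mxE big1 // => l _; rewrite !mxE ik mul0r.
Qed.

Section Gradient.
Variable R : realType.

Lemma derive_grad m n (f : 'M[R]_(m, n) -> R) x w : differentiable f x ->
  'D_w f x = \tr ((grad f x)^T *m w).
Proof.
move=> df; rewrite deriveE // {1 2}(matrix_sum_delta w) !linear_sum /=.
apply: eq_bigr => i _; rewrite !linear_sum /=; apply: eq_bigr => j _.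
by rewrite !linearZ /= -deriveE // mxtrace_trmx_mul_delta mxE.
Qed.

Lemma grad_comp_mulmx m n p (f : 'M[R]_(m, p) -> R) (A : 'M[R]_(m, n)) Z :
  differentiable f (A *m Z) ->
  grad (fun Z => f (A *m Z)) Z = A^T *m grad f (A *m Z).
Proof.
move=> df; apply/matrixP => i j; rewrite mxE.
rewrite (derive_comp_linear f (mulmx A)) derive_grad // mulmxA.
by rewrite -[_^T *m A]trmxK trmx_mul trmxK mxtrace_trmx_mul_delta.
Qed.

Lemma grad_comp_mulmxr m n p (f : 'M[R]_(m, p) -> R) (X : 'M[R]_(n, p)) Z :
  differentiable f (Z *m X) ->
  grad (fun Z => f (Z *m X)) Z = grad f (Z *m X) *m X^T.
Proof.
move=> df; apply/matrixP => i j; rewrite mxE.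
rewrite (derive_comp_linear f (mulmxr X)) derive_grad //= mulmxA mxtrace_mulC.
by rewrite mulmxA -[X *m _]trmxK trmx_mul trmxK mxtrace_trmx_mul_delta.
Qed.

Lemma grad_sq_loss k d n (g : 'cV[R]_k -> R) (xs : 'I_n -> 'cV[R]_d) ys B :
  (forall s, differentiable g (B *m xs s)) ->
  grad (sq_loss g xs ys) B =
    - \sum_(s < n) (ys s - g (B *m xs s)) *: (grad g (B *m xs s) *m (xs s)^T).
Proof.
move=> dg; pose h s (B : 'M[R]_(k, d)) := g (B *m xs s).
pose F s := (cst (ys s) - h s) ^+ 2.
have -> : sq_loss g xs ys = 2^-1 \*: \sum_(s < n) F s.
  by apply/funext => C; rewrite /sq_loss /= fct_sumE.
have dh s u : derivable (h s) B u.
  by rewrite (derivable_comp_linear g (mulmxr (xs s))); exact: diff_derivable (dg s).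
have dF s u : derivable (F s) B u.
  by apply: derivableX; apply: derivableB => //; apply: derivable_cst.
apply/matrixP => i j; rewrite !mxE deriveZ ?derive_sum //; last exact: derivable_sum.
have Dh s : 'D_(delta_mx i j) (h s) B = (grad g (B *m xs s) *m (xs s)^T) i j.
  by rewrite -grad_comp_mulmxr // mxE.
rewrite summxE -sumrN scaler_sumr; apply: eq_bigr => s _.
rewrite deriveX; last exact: derivableB (derivable_cst _ _ _) (dh s _).
rewrite deriveB ?derive_cst ?Dh // sub0r expr1 [in RHS]mxE !scalerN scalerA mulrA.
by rewrite mulVf ?pnatr_eq0 // mul1r.
Qed.

Lemma gd_step_from0 k d n (g : 'cV[R]_k -> R) (xs : 'I_n -> 'cV[R]_d) ys eta :
  differentiable g 0 -> g 0 = 0 ->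
  gd_step g xs ys eta 0 = (eta *: grad g 0) *m (\sum_(s < n) ys s *: xs s)^T.
Proof.
move=> dg g0; rewrite /gd_step grad_sq_loss => [|s]; last by rewrite mul0mx.
rewrite sub0r scalerN opprK scaler_sumr [X in _ *m X]linear_sum mulmx_sumr.
apply: eq_bigr => s _.
by rewrite mul0mx g0 subr0 [in RHS]linearZ /= -scalemxAr -scalemxAl !scalerA mulrC.
Qed.

End Gradient.

Section RankOne.
Variable R : realFieldType.

Lemma trmx_mul_self_eq0 m n (A : 'M[R]_(m, n)) : (A^T *m A == 0) = (A == 0).
Proof.
apply/eqP/eqP => [AtA0|->]; last by rewrite mulmx0.
apply/matrixP => i j; move/matrixP/(_ j j): AtA0; rewrite !mxE => /psumr_eq0P.
have sq_ge0 l : true -> 0 <= A^T j l * A l j by rewrite mxE -expr2 sqr_ge0.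
by move=> /(_ sq_ge0 i isT) /eqP; rewrite mxE -expr2 sqrf_eq0 => /eqP.
Qed.

Lemma rank_one_gram_proportional k d (u w : 'cV[R]_k) (v : 'cV[R]_d) : u != 0 ->
  let B := u *m v^T in exists c, (B^T *m w) *m (B^T *m w)^T = c *: (B^T *m B).
Proof.
move=> u0 B; set a := (u^T *m w) 0 0; set s := (u^T *m u) 0 0.
have s0 : s != 0.
  apply: contraNneq u0 => s0.
  by rewrite -trmx_mul_self_eq0 [_ *m _]mx11_scalar -/s s0 raddf0.
have BtE : B^T = v *m u^T by rewrite trmx_mul trmxK.
have Btw : B^T *m w = a *: v by rewrite BtE -mulmxA [u^T *m w]mx11_scalar mul_mx_scalar.
have BtB : B^T *m B = s *: (v *m v^T).
  by rewrite BtE mulmxA -(mulmxA v) [u^T *m u]mx11_scalar mul_mx_scalar -scalemxAl.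
exists (a ^+ 2 / s); rewrite Btw BtB linearZ /= -scalemxAl -scalemxAr !scalerA.
by congr (_ *: _); field.
Qed.

End RankOne.

Theorem proposition2 (R : realType) (d k : nat) (hd : (1 <= d)%N) (hk : (1 <= k)%N)
  (g : 'cV[R]_k -> R)
  (hg_diff : forall x : 'cV[R]_k, differentiable g x)
  (hg0 : g 0 = 0)
  (hgrad0 : grad g 0 != 0)
  (n : nat) (xs : 'I_n -> 'cV[R]_d) (ys : 'I_n -> R)
  (eta : R) (heta : 0 < eta) :
  let B1 := gd_step g xs ys eta 0 in
  let f1 := fun z : 'cV[R]_d => g (B1 *m z) in
  forall z : 'cV[R]_d,
    exists c : R, grad f1 z *m (grad f1 z)^T = c *: (B1^T *m B1).
Proof.
move=> B1 f1 z.
have -> : grad f1 z = B1^T *m grad g (B1 *m z) by apply: grad_comp_mulmx.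
rewrite /B1 gd_step_from0 //; apply: rank_one_gram_proportional.
by rewrite scaler_eq0 negb_or hgrad0 gt_eqF.
Qed.
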